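(* For every integer $k\ge 1$, the ordinary generating function $F^{-}_k(x)=\sum_{n\ge1} f^{(n)}_k x^n$, where $f^{(n)}_k$ is the number of trees $t\in\mathcal{T}_n$ with $\gamma(t)\le k$, satisfies $$F^{-}_k = x + (F^{-}_k)^2 - 2^{k-1}x^{k+1},$$ and consequently $$F^{-}_k(x)=\frac{1-\sqrt{1-4x+2^{k+1}x^{k+1}}}{2}.$$
   Context: $\mathcal{T}$ denotes the class of ordered (plane) rooted binary trees, in which every internal node has exactly two ordered children (left and right); the size of a tree is its number of leaves, and $\mathcal{T}_n$ is the set of such trees of size $n$. A tree is a caterpillar if every node is either a leaf or has at least one leaf among its direct children (the single-leaf tree is the caterpillar of size 1). For a tree $t$ and a node $v$, the subtree of $t$ at $v$ consists of $v$ together with all its descendants. $\gamma(t)$ is the largest size of a caterpillar that occurs as the subtree of $t$ at some node of $t$. *)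

From Stdlib Require Import Reals Lra Lia ZArith Arith List.
Import ListNotations.

(* Ordered rooted binary trees; size = number of leaves. *)
Inductive tree : Type :=
| Leaf : tree
| Node : tree -> tree -> tree.

Fixpoint leaves (t : tree) : nat :=
  match t with Leaf => 1 | Node l r => leaves l + leaves r end.

Fixpoint subtrees (t : tree) : list tree :=
  t :: match t with Leaf => [] | Node l r => subtrees l ++ subtrees r end.

Definition is_leaf (t : tree) : bool :=
  match t with Leaf => true | _ => false end.

Definition node_ok (v : tree) : bool :=
  match v with Leaf => true | Node l r => is_leaf l || is_leaf r end.

Definition caterpillar (t : tree) : bool := forallb node_ok (subtrees t).

Definition gamma (t : tree) : nat :=
  fold_right Nat.max 0
    (map leaves (filter caterpillar (subtrees t))).

Definition counts (P : tree -> Prop) (c : nat) : Prop :=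
  exists l : list tree, NoDup l /\ (forall t, In t l <-> P t) /\ length l = c.

From Coquelicot Require Import Coquelicot.
From Stdlib Require Import Reals ZArith Arith List Lia Lra Psatz FinFun Bool.
Import ListNotations.
Open Scope nat_scope.

(* A tree with n >= 2 leaves is a pair of branches, and
   gamma (Node l r) <= k holds exactly when gamma l <= k, gamma r <= k and the
   tree itself is not "critical", i.e. not a caterpillar with k+1 leaves.  The
   branches of a critical tree automatically satisfy gamma <= k, and there are
   2^(k-1) caterpillars with k+1 leaves (each one is a smaller caterpillar with a
   leaf grafted on the left or on the right).  Hence, for n >= 2,
     sum_(i=1)^(n-1) f_i f_(n-i) = [n = k+1] 2^(k-1) + f_n,
   which is the coefficientwise form of the functional equation.

   For any nonnegative sequence a with a_0 = 0 satisfying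
   a_n = [n=1] + (a*a)_n - c [n=m] (c >= 0), the partial sums of the series at
   0 <= y < 1/4 stay below the smaller root of r = y + r^2; so the series
   converges absolutely for |x| < 1/4, the Cauchy product gives L = x + L^2 - c x^m,
   and L <= 1/2 selects the root L = (1 - sqrt (1 - 4x + 4 c x^m)) / 2. *)

(** * Counting with duplicate-free lists *)

Lemma counts_unique P a b : counts P a -> counts P b -> a = b.
Proof.
  intros [l1 [N1 [M1 <-]]] [l2 [N2 [M2 <-]]].
  apply Nat.le_antisymm; apply NoDup_incl_length; auto; intros x Hx.
  - apply M2, M1, Hx.
  - apply M1, M2, Hx.
Qed.

Lemma counts_ext P Q a : (forall t, P t <-> Q t) -> counts P a -> counts Q a.
Proof.
  intros H [l [N [M L]]]. exists l; split; [exact N|split; [|exact L]].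
  intro t; rewrite M; apply H.
Qed.

Lemma counts_empty (P : tree -> Prop) : (forall t, ~ P t) -> counts P 0.
Proof.
  intros H. exists []. split; [constructor|split; [|reflexivity]].
  intro t; split; [intros []|intro Ht; exfalso; exact (H t Ht)].
Qed.

Lemma counts_single t0 : counts (fun t => t = t0) 1.
Proof.
  exists [t0]. repeat split; [repeat constructor; intros []| |].
  - intros [H|[]]; auto.
  - intros ->; left; auto.
Qed.

Lemma counts_union P Q a b : counts P a -> counts Q b ->
  (forall t, P t -> Q t -> False) -> counts (fun t => P t \/ Q t) (a + b).
Proof.
  intros [l1 [N1 [M1 <-]]] [l2 [N2 [M2 <-]]] H.
  exists (l1 ++ l2). repeat split.
  - apply NoDup_app; auto. intros x H1 H2. apply (H x); [apply M1|apply M2]; auto.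
  - rewrite in_app_iff, M1, M2; tauto.
  - rewrite in_app_iff, M1, M2; tauto.
  - apply length_app.
Qed.

Lemma counts_bigunion (P : nat -> tree -> Prop) (c : nat -> nat) (s : list nat) :
  NoDup s -> (forall i, counts (P i) (c i)) -> (forall i j t, P i t -> P j t -> i = j) ->
  counts (fun t => exists i, In i s /\ P i t) (fold_right Nat.add 0 (map c s)).
Proof.
  intros Hs Hc Hd. induction s as [|i s IH].
  - apply counts_empty. intros t [i [[] _]].
  - apply NoDup_cons_iff in Hs as [Hi Hs]. simpl.
    eapply counts_ext; [|apply counts_union; [apply Hc|apply (IH Hs)|]].
    + intro t; split.
      * intros [Pi|[j [Hj Pj]]]; [exists i|exists j]; simpl; auto.
      * intros [j [[<-|Hj] Pj]]; [left|right; exists j]; auto.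
    + intros t Pi [j [Hj Pj]]. rewrite (Hd _ _ _ Pi Pj) in Hi. auto.
Qed.

Lemma counts_map (g : tree -> tree) P a : Injective g ->
  counts P a -> counts (fun t => exists u, t = g u /\ P u) a.
Proof.
  intros Hg [l [N [M <-]]]. exists (map g l). repeat split.
  - apply Injective_map_NoDup; auto.
  - rewrite in_map_iff. intros [u [<- Hu]]. exists u; split; auto; apply M; auto.
  - rewrite in_map_iff. intros [u [-> Hu]]. exists u; split; auto; apply M; auto.
  - apply length_map.
Qed.

Definition node_pairs (la lb : list tree) : list tree :=
  flat_map (fun l => map (Node l) lb) la.

Lemma node_pairs_NoDup la lb : NoDup la -> NoDup lb -> NoDup (node_pairs la lb).
Proof.
  intros Ha Hb. induction la as [|x la IH]; simpl; [constructor|].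
  apply NoDup_cons_iff in Ha as [Hx Ha]. apply NoDup_app; auto.
  - apply Injective_map_NoDup; auto. intros u v E; inversion E; auto.
  - intros t H1 H2. apply in_map_iff in H1 as [r [<- _]].
    apply in_flat_map in H2 as [l [Hl H2]]. apply in_map_iff in H2 as [r' [E _]].
    inversion E; subst; auto.
Qed.

Lemma node_pairs_length la lb : length (node_pairs la lb) = length la * length lb.
Proof.
  induction la as [|x la IH]; auto.
  unfold node_pairs in *. simpl. rewrite length_app, length_map, IH. reflexivity.
Qed.

Lemma counts_prod A B a b : counts A a -> counts B b ->
  counts (fun t => exists l r, t = Node l r /\ A l /\ B r) (a * b).
Proof.
  intros [la [Na [Ma <-]]] [lb [Nb [Mb <-]]].
  exists (node_pairs la lb). repeat split.
  - apply node_pairs_NoDup; auto.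
  - unfold node_pairs. rewrite in_flat_map. intros [l [Hl Ht]].
    apply in_map_iff in Ht as [r [<- Hr]].
    exists l, r; split; auto; split; [apply Ma|apply Mb]; auto.
  - unfold node_pairs. rewrite in_flat_map. intros [l [r [-> [Hl Hr]]]].
    exists l; split; [apply Ma; auto|]. apply in_map; apply Mb; auto.
  - apply node_pairs_length.
Qed.

Lemma counts_split P (q : tree -> bool) a b c : counts P a ->
  counts (fun t => P t /\ q t = true) b -> counts (fun t => P t /\ q t = false) c ->
  a = b + c.
Proof.
  intros [l [N [M <-]]] Hb Hc.
  assert (Eb : b = length (filter q l)).
  { apply (counts_unique _ _ _ Hb). exists (filter q l).
    split; [apply NoDup_filter; auto|split; [|reflexivity]].
    intro t; rewrite filter_In, M; tauto. }
  assert (Ec : c = length (filter (fun t => negb (q t)) l)).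
  { apply (counts_unique _ _ _ Hc). exists (filter (fun t => negb (q t)) l).
    split; [apply NoDup_filter; auto|split; [|reflexivity]].
    intro t; rewrite filter_In, M, negb_true_iff; tauto. }
  subst. clear. induction l as [|x l IH]; simpl; auto.
  destruct (q x); simpl; lia.
Qed.

(** * Leaves, caterpillars and [gamma] *)

Lemma leaves_pos t : 1 <= leaves t.
Proof. induction t; simpl; lia. Qed.

Lemma leaves_one t : leaves t = 1 -> t = Leaf.
Proof.
  destruct t as [|l r]; simpl; auto.
  pose proof (leaves_pos l); pose proof (leaves_pos r); lia.
Qed.

Lemma subtree_leaves t s : In s (subtrees t) -> leaves s <= leaves t.
Proof.
  induction t as [|l IHl r IHr]; simpl.
  - intros [<-|[]]; auto.
  - intros [<-|H]; [simpl; lia|].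
    apply in_app_or in H as [H|H]; [apply IHl in H|apply IHr in H]; lia.
Qed.

Lemma fold_max_app l1 l2 : fold_right Nat.max 0 (l1 ++ l2) =
  Nat.max (fold_right Nat.max 0 l1) (fold_right Nat.max 0 l2).
Proof. induction l1; simpl; lia. Qed.

Lemma fold_max_le l m : (forall x, In x l -> x <= m) -> fold_right Nat.max 0 l <= m.
Proof.
  induction l as [|x l IH]; simpl; intros H; [lia|].
  pose proof (H x (or_introl eq_refl)). pose proof (IH (fun y Hy => H y (or_intror Hy))).
  lia.
Qed.

Lemma fold_max_ge l x : In x l -> x <= fold_right Nat.max 0 l.
Proof. induction l; simpl; [intros []|intros [<-|H]; [|apply IHl in H]; lia]. Qed.

Lemma gamma_le_leaves t : gamma t <= leaves t.
Proof.
  apply fold_max_le. intros x Hx.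
  apply in_map_iff in Hx as [s [<- Hs]]. apply filter_In in Hs as [Hs _].
  apply subtree_leaves; auto.
Qed.

Lemma gamma_caterpillar t : caterpillar t = true -> gamma t = leaves t.
Proof.
  intros C. apply Nat.le_antisymm; [apply gamma_le_leaves|].
  apply fold_max_ge, in_map, filter_In. split; auto.
  destruct t; simpl; auto.
Qed.

Lemma caterpillar_Node l r : caterpillar (Node l r) =
  (is_leaf l || is_leaf r) && caterpillar l && caterpillar r.
Proof.
  unfold caterpillar. cbn [subtrees forallb]. rewrite forallb_app.
  cbn [node_ok]. destruct (is_leaf l || is_leaf r); reflexivity.
Qed.

Lemma gamma_Node l r : gamma (Node l r) = Nat.max
  (if caterpillar (Node l r) then leaves l + leaves r else 0) (Nat.max (gamma l) (gamma r)).
Proof.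
  unfold gamma at 1. cbn [subtrees filter].
  destruct (caterpillar (Node l r)); cbn [map fold_right];
    rewrite filter_app, map_app, fold_max_app; reflexivity.
Qed.

(* Both branches of a caterpillar are caterpillars, one of them a single leaf. *)
Lemma caterpillar_Node_leaves l r : caterpillar (Node l r) = true ->
  caterpillar l = true /\ caterpillar r = true /\
  leaves l + leaves r = S (Nat.max (leaves l) (leaves r)).
Proof.
  rewrite caterpillar_Node. intros C.
  apply andb_prop in C as [C Cr]. apply andb_prop in C as [C Cl].
  repeat split; auto. pose proof (leaves_pos l); pose proof (leaves_pos r).
  apply orb_prop in C as [C|C]; [destruct l|destruct r]; try discriminate; cbn [leaves] in *; lia.
Qed.

(* The trees forbidden at the root by [gamma <= k]: caterpillars with [k+1] leaves. *)
Definition critical (k : nat) (t : tree) : bool :=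
  caterpillar t && Nat.eqb (leaves t) (k + 1).

Lemma gamma_Node_le k l r : gamma (Node l r) <= k <->
  gamma l <= k /\ gamma r <= k /\ critical k (Node l r) = false.
Proof.
  rewrite gamma_Node. unfold critical.
  cbn [leaves]. destruct (caterpillar (Node l r)) eqn:C; cbn [andb].
  - destruct (caterpillar_Node_leaves l r C) as [Cl [Cr E]].
    rewrite (gamma_caterpillar _ Cl), (gamma_caterpillar _ Cr), E.
    rewrite Nat.eqb_neq. split; [intros H; repeat split|intros [Hl [Hr Hn]]]; lia.
  - split; [intros H; repeat split|intros [Hl [Hr _]]]; lia.
Qed.

Lemma critical_branches k l r : critical k (Node l r) = true ->
  gamma l <= k /\ gamma r <= k.
Proof.
  unfold critical. intros H. apply andb_prop in H as [C E]. apply Nat.eqb_eq in E.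
  destruct (caterpillar_Node_leaves l r C) as [Cl [Cr _]].
  rewrite (gamma_caterpillar _ Cl), (gamma_caterpillar _ Cr).
  simpl in E. pose proof (leaves_pos l); pose proof (leaves_pos r). lia.
Qed.

Lemma caterpillar_succ j t :
  caterpillar t = true /\ leaves t = S j + 2 <->
  (exists c, t = Node Leaf c /\ caterpillar c = true /\ leaves c = j + 2) \/
  (exists c, t = Node c Leaf /\ caterpillar c = true /\ leaves c = j + 2).
Proof.
  split.
  - intros [C E]. destruct t as [|l r]; simpl in E; [lia|].
    rewrite caterpillar_Node in C.
    apply andb_prop in C as [C Cr]. apply andb_prop in C as [C Cl].
    destruct l as [|l1 l2]; [left; exists r | destruct r; [right; exists (Node l1 l2)|]];
      simpl in *; repeat split; auto; try lia; discriminate.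
  - intros [[c [-> [C E]]]|[c [-> [C E]]]]; rewrite caterpillar_Node, C;
      simpl; rewrite ?orb_true_r; split; auto; lia.
Qed.

Lemma caterpillar_count j :
  counts (fun t => caterpillar t = true /\ leaves t = j + 2) (2 ^ j).
Proof.
  induction j as [|j IH].
  - eapply counts_ext; [|apply (counts_single (Node Leaf Leaf))].
    intro t; split; [intros ->; split; reflexivity|].
    intros [C E]. destruct t as [|l r]; simpl in E; [lia|].
    pose proof (leaves_pos l); pose proof (leaves_pos r).
    rewrite (leaves_one l), (leaves_one r); auto; lia.
  - replace (2 ^ S j) with (2 ^ j + 2 ^ j) by (simpl; lia).
    eapply counts_ext; [intro t; symmetry; apply caterpillar_succ|].
    apply counts_union.
    + apply (counts_map (Node Leaf)); [intros u v E; inversion E; auto|apply IH].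
    + apply (counts_map (fun u => Node u Leaf)); [intros u v E; inversion E; auto|apply IH].
    + intros t [u [-> [_ E]]] [v [E' _]]. inversion E'; subst. simpl in E. lia.
Qed.

Lemma critical_count k n : 1 <= k ->
  counts (fun t => leaves t = n /\ critical k t = true)
         (if Nat.eqb n (k + 1) then 2 ^ (k - 1) else 0).
Proof.
  intros hk. destruct (Nat.eqb_spec n (k + 1)) as [->|Hne].
  - eapply counts_ext; [|apply (caterpillar_count (k - 1))].
    intro t. unfold critical. rewrite andb_true_iff, Nat.eqb_eq.
    replace (k - 1 + 2) with (k + 1) by lia. tauto.
  - apply counts_empty. intros t [E C].
    unfold critical in C. rewrite andb_true_iff, Nat.eqb_eq in C. lia.
Qed.

(** * The recurrence for the number of trees with [gamma <= k] *)

Section Recurrence.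
Variable k : nat.
Variable f : nat -> nat.
Hypothesis hf : forall n, counts (fun t => leaves t = n /\ gamma t <= k) (f n).

Lemma f_zero : f 0 = 0.
Proof.
  apply (counts_unique _ _ _ (hf 0)). apply counts_empty.
  intros t [E _]. pose proof (leaves_pos t); lia.
Qed.

Lemma f_one : 1 <= k -> f 1 = 1.
Proof.
  intros hk. apply (counts_unique _ _ _ (hf 1)). eapply counts_ext; [|apply (counts_single Leaf)].
  intro t; split.
  - intros ->. split; [reflexivity|]. unfold gamma; simpl; lia.
  - intros [E _]; apply leaves_one; auto.
Qed.

Definition convolution (n : nat) : nat :=
  fold_right Nat.add 0 (map (fun i => f i * f (n - i)) (seq 1 (n - 1))).

Definition good_branches (n : nat) (t : tree) : Prop :=
  leaves t = n /\ exists l r, t = Node l r /\ gamma l <= k /\ gamma r <= k.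

(* Product and sum rules, the left branch having [i] leaves for [1 <= i <= n-1]. *)
Lemma good_branches_count n : counts (good_branches n) (convolution n).
Proof.
  set (split_at i t := exists l r, t = Node l r /\
         (leaves l = i /\ gamma l <= k) /\ (leaves r = n - i /\ gamma r <= k)).
  eapply counts_ext; [|apply (counts_bigunion split_at); [apply seq_NoDup| |]].
  - intro t; split.
    + intros [i [Hi [l [r [-> [[El Gl] [Er Gr]]]]]]]. apply in_seq in Hi.
      split; [simpl; lia|]. exists l, r; auto.
    + intros [E [l [r [-> [Gl Gr]]]]]. simpl in E.
      pose proof (leaves_pos l); pose proof (leaves_pos r).
      exists (leaves l). split; [apply in_seq; lia|].
      exists l, r. repeat split; auto; lia.
  - intro i. apply counts_prod; apply hf.
  - intros i j t [l [r [-> [[El _] _]]]] [l' [r' [E [[El' _] _]]]].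
    inversion E; subst; auto.
Qed.

Lemma good_as_branches n t : 2 <= n ->
  (leaves t = n /\ gamma t <= k) <-> good_branches n t /\ critical k t = false.
Proof.
  intros Hn. split.
  - intros [E G]. destruct t as [|l r]; simpl in E; [lia|].
    apply gamma_Node_le in G as [Gl [Gr Gc]].
    split; auto. split; [exact E|exists l, r; auto].
  - intros [[E [l [r [-> [Gl Gr]]]]] Gc]. split; auto. apply gamma_Node_le; auto.
Qed.

Lemma critical_as_branches n t : 1 <= k ->
  (leaves t = n /\ critical k t = true) <-> good_branches n t /\ critical k t = true.
Proof.
  intros hk. split.
  - intros [E C]. split; auto. split; auto.
    destruct t as [|l r].
    { unfold critical in C. apply andb_prop in C as [_ C]. apply Nat.eqb_eq in C.
      simpl in C; lia. }
    exists l, r. split; auto. apply critical_branches; auto.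
  - intros [[E _] C]; auto.
Qed.

(* Combinatorial form of [F = x + F^2 - 2^(k-1) x^(k+1)] at [x^n], [n >= 2]. *)
Theorem count_recurrence n : 1 <= k -> 2 <= n ->
  convolution n = (if Nat.eqb n (k + 1) then 2 ^ (k - 1) else 0) + f n.
Proof.
  intros hk Hn. apply (counts_split (good_branches n) (critical k)).
  - apply good_branches_count.
  - eapply counts_ext; [intro t; apply critical_as_branches; auto|]. apply critical_count; auto.
  - eapply counts_ext; [intro t; apply good_as_branches; auto|]. apply hf.
Qed.

End Recurrence.

(** * Power series solving [F = x + F^2 - c x^m] *)

Open Scope R_scope.

Lemma is_series_partial_sums (u : nat -> R) (l : R) :
  is_series u l <-> is_lim_seq (sum_f_R0 u) l.
Proof. rewrite is_series_Reals, is_lim_seq_Reals. reflexivity. Qed.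

Lemma sum_indicator (m : nat) (v : R) N :
  sum_f_R0 (fun n => if Nat.eqb n m then v else 0) N = if Nat.leb m N then v else 0.
Proof.
  induction N as [|N IH].
  - destruct m; reflexivity.
  - cbn [sum_f_R0]. rewrite IH.
    destruct (Nat.eqb_spec (S N) m), (Nat.leb_spec m N), (Nat.leb_spec m (S N));
      try lia; lra.
Qed.

Lemma is_series_indicator (m : nat) (v : R) :
  is_series (fun n => if Nat.eqb n m then v else 0) v.
Proof.
  apply is_series_Reals. intros eps Heps. exists m. intros N HN.
  rewrite sum_indicator. replace (Nat.leb m N) with true by (symmetry; apply Nat.leb_le; lia).
  unfold R_dist. rewrite Rminus_diag, Rabs_R0. exact Heps.
Qed.

Lemma convolution_scale (a : nat -> R) z n :
  sum_f_R0 (fun i => (a i * z ^ i) * (a (n - i)%nat * z ^ (n - i))) n =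
  sum_f_R0 (fun i => a i * a (n - i)%nat) n * z ^ n.
Proof.
  rewrite Rmult_comm, scal_sum. apply sum_eq. intros i Hi.
  replace (z ^ n) with (z ^ i * z ^ (n - i)) by (rewrite <- pow_add; f_equal; lia).
  ring.
Qed.

(* For [b >= 0] with [b 0 = 0], the first [N+2] terms of the self-convolution of [b]
   only involve [b 1], ..., [b N], hence add up to at most [(b 0 + ... + b N)^2]. *)
Lemma convolution_sum_le_square (b : nat -> R) N :
  (forall n, 0 <= b n) -> b 0%nat = 0 ->
  sum_f_R0 (fun n => sum_f_R0 (fun i => b i * b (n - i)%nat) n) (S N) <=
  sum_f_R0 b N * sum_f_R0 b N.
Proof.
  intros Hb H0.
  set (b' := fun i => if Nat.leb i N then b i else 0).
  assert (Hb' : forall i, 0 <= b' i) by (intro i; unfold b'; destruct Nat.leb; auto; lra).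
  assert (Trunc : sum_f_R0 b' (S N) = sum_f_R0 b N).
  { cbn [sum_f_R0]. unfold b' at 2.
    replace (Nat.leb (S N) N) with false by (symmetry; apply Nat.leb_gt; lia).
    rewrite Rplus_0_r. apply sum_eq. intros i Hi. unfold b'.
    replace (Nat.leb i N) with true by (symmetry; apply Nat.leb_le; lia). reflexivity. }
  assert (Same : sum_f_R0 (fun n => sum_f_R0 (fun i => b i * b (n - i)%nat) n) (S N) =
                 sum_f_R0 (fun n => sum_f_R0 (fun i => b' i * b' (n - i)%nat) n) (S N)).
  { apply sum_eq; intros n Hn; apply sum_eq; intros i Hi. unfold b'.
    destruct (Nat.leb_spec i N), (Nat.leb_spec (n - i) N); try reflexivity; try lia;
      first [replace (n - i)%nat with 0%nat by lia | replace i with 0%nat by lia];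
      rewrite H0; ring. }
  pose proof (cauchy_finite b' b' (S N) (Nat.lt_0_succ N)) as Cauchy.
  match type of Cauchy with _ = _ + ?Rest => assert (0 <= Rest) end.
  { apply cond_pos_sum; intro; apply cond_pos_sum; intro; apply Rmult_le_pos; auto. }
  rewrite Trunc in Cauchy. lra.
Qed.

Section QuadraticSeries.
Variable a : nat -> R.
Variables (c : R) (m : nat).
Hypothesis a_nonneg : forall n, 0 <= a n.
Hypothesis a_zero : a 0%nat = 0.
Hypothesis c_nonneg : 0 <= c.
(* The coefficientwise form of [F = x + F^2 - c x^m]. *)
Hypothesis a_rec : forall n, a n = (if Nat.eqb n 1 then 1 else 0) +
  sum_f_R0 (fun i => a i * a (n - i)%nat) n - (if Nat.eqb n m then c else 0).

(* Dropping the correction term: [F(y) <= y + F(y)^2] coefficientwise for [y >= 0]. *)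
Lemma scaled_coef_le y n : 0 <= y ->
  a n * y ^ n <= (if Nat.eqb n 1 then y else 0) +
    sum_f_R0 (fun i => (a i * y ^ i) * (a (n - i)%nat * y ^ (n - i))) n.
Proof.
  intros Hy. rewrite convolution_scale.
  assert (Hyn : 0 <= y ^ n) by (apply pow_le; auto).
  assert (a n <= (if Nat.eqb n 1 then 1 else 0) + sum_f_R0 (fun i => a i * a (n - i)%nat) n).
  { rewrite (a_rec n) at 1. destruct (Nat.eqb n m); lra. }
  destruct (Nat.eqb_spec n 1) as [->|_]; simpl in *; nra.
Qed.

(* Hence the partial sums at [0 <= y < 1/4] stay below the smaller root [r] of
   [r = y + r^2]: inductively [S_(N+1) <= y + S_N^2 <= y + r^2 = r]. *)
Lemma partial_sums_bounded y N : 0 <= y < / 4 ->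
  sum_f_R0 (fun n => a n * y ^ n) N <= (1 - sqrt (1 - 4 * y)) / 2.
Proof.
  intros Hy. set (b := fun n => a n * y ^ n). set (r := (1 - sqrt (1 - 4 * y)) / 2).
  assert (Hs2 : sqrt (1 - 4 * y) * sqrt (1 - 4 * y) = 1 - 4 * y) by (apply sqrt_sqrt; lra).
  assert (Hs0 : 0 <= sqrt (1 - 4 * y)) by apply sqrt_pos.
  assert (Root : y + r * r = r) by (unfold r; nra).
  assert (Hr : 0 <= r) by (unfold r; nra).
  assert (Hb : forall n, 0 <= b n) by (intro n; apply Rmult_le_pos; auto; apply pow_le; lra).
  assert (Hb0 : b 0%nat = 0) by (unfold b; rewrite a_zero; ring).
  induction N as [|N IH]; [simpl; lra|].
  assert (Step : sum_f_R0 b (S N) <= y + sum_f_R0 b N * sum_f_R0 b N).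
  { apply Rle_trans with (sum_f_R0 (fun n => (if Nat.eqb n 1 then y else 0) +
                            sum_f_R0 (fun i => b i * b (n - i)%nat) n) (S N)).
    - apply sum_Rle. intros n _. apply scaled_coef_le. lra.
    - rewrite sum_plus, sum_indicator. simpl (Nat.leb 1 (S N)).
      pose proof (convolution_sum_le_square b N Hb Hb0). lra. }
  assert (0 <= sum_f_R0 b N) by (apply cond_pos_sum; auto).
  fold b r in IH |- *. nra.
Qed.

(* Absolute convergence for [|x| < 1/4], by monotone convergence. *)
Lemma abs_series_converges x : Rabs x < / 4 ->
  ex_series (fun n => Rabs (a n * x ^ n)).
Proof.
  intros Hx.
  assert (Habs : forall n, Rabs (a n * x ^ n) = a n * Rabs x ^ n).
  { intro n. rewrite Rabs_mult, RPow_abs, (Rabs_pos_eq (a n)); auto. }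
  apply (ex_series_ext (fun n => a n * Rabs x ^ n)); [intro n; auto|].
  destruct (ex_finite_lim_seq_incr (sum_f_R0 (fun n => a n * Rabs x ^ n))
              ((1 - sqrt (1 - 4 * Rabs x)) / 2)) as [l Hl].
  - intro n. cbn [sum_f_R0].
    assert (0 <= a (S n) * Rabs x ^ S n) by (apply Rmult_le_pos; auto; apply pow_le, Rabs_pos).
    lra.
  - intro n. apply partial_sums_bounded. split; [apply Rabs_pos|auto].
  - exists l. apply is_series_partial_sums; auto.
Qed.

(* The sum is at most the smaller root [r], in particular below [1/2]. *)
Lemma series_le_root x L : Rabs x < / 4 -> is_series (fun n => a n * x ^ n) L ->
  L <= (1 - sqrt (1 - 4 * Rabs x)) / 2.
Proof.
  intros Hx HL. apply is_series_partial_sums in HL.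
  assert (Le : Rbar_le L ((1 - sqrt (1 - 4 * Rabs x)) / 2)).
  { refine (is_lim_seq_le _ _ L _ _ HL (is_lim_seq_const _)). intro N.
    apply Rle_trans with (Rabs (sum_f_R0 (fun n => a n * x ^ n) N)); [apply Rle_abs|].
    apply Rle_trans with (sum_f_R0 (fun n => Rabs (a n * x ^ n)) N);
      [apply sum_f_R0_triangle|].
    rewrite (sum_eq _ (fun n => a n * Rabs x ^ n)).
    - apply partial_sums_bounded. split; [apply Rabs_pos|auto].
    - intros n _. rewrite Rabs_mult, RPow_abs, (Rabs_pos_eq (a n)); auto. }
  exact Le.
Qed.

(* Summing the recurrence with the Cauchy product: [L = x + L^2 - c x^m]. *)
Lemma series_quadratic x L : Rabs x < / 4 -> is_series (fun n => a n * x ^ n) L ->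
  L - L * L = x - c * x ^ m.
Proof.
  intros Hx HL. set (u := fun n => a n * x ^ n).
  pose proof (abs_series_converges x Hx) as Habs.
  pose proof (is_series_mult u u L L HL HL Habs Habs) as Hsq.
  pose proof (is_series_minus _ _ _ _ HL Hsq) as Hdiff.
  pose proof (is_series_minus _ _ _ _ (is_series_indicator 1 x)
                (is_series_indicator m (c * x ^ m))) as Hind.
  assert (Hterm : is_series (fun n => minus (u n) (sum_f_R0 (fun i => u i * u (n - i)%nat) n))
                            (minus x (c * x ^ m))).
  { refine (is_series_ext _ _ _ _ Hind). intro n. unfold u. rewrite (a_rec n).
    rewrite convolution_scale. unfold minus, plus, opp; simpl.
    destruct (Nat.eqb_spec n 1), (Nat.eqb_spec n m); subst; simpl; ring. }
  apply is_series_unique in Hdiff, Hterm.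
  symmetry in Hdiff. etransitivity; [exact Hdiff|exact Hterm].
Qed.

(* The closed form, choosing the root [L <= 1/2]. *)
Theorem quadratic_series_sum x : Rabs x < / 4 ->
  is_series (fun n => a n * x ^ n) ((1 - sqrt (1 - 4 * x + 4 * c * x ^ m)) / 2).
Proof.
  intros Hx.
  destruct (ex_series_Rabs _ (abs_series_converges x Hx)) as [L HL]. change R in L.
  pose proof (series_quadratic x L Hx HL) as Quad.
  pose proof (series_le_root x L Hx HL) as Le.
  pose proof (sqrt_pos (1 - 4 * Rabs x)).
  assert (Disc : 1 - 4 * x + 4 * c * x ^ m = (1 - 2 * L) * (1 - 2 * L)) by nra.
  rewrite Disc, sqrt_square by lra.
  replace ((1 - (1 - 2 * L)) / 2) with L by field. exact HL.
Qed.

End QuadraticSeries.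

Lemma Z_of_nat_fold_sum (h : nat -> nat) s : Z.of_nat (fold_right Nat.add 0%nat (map h s)) =
  fold_right Z.add 0%Z (map (fun i => Z.of_nat (h i)) s).
Proof. induction s; simpl; auto. rewrite Nat2Z.inj_add, IHs. reflexivity. Qed.

Lemma INR_fold_sum (h : nat -> nat) s : INR (fold_right Nat.add 0%nat (map h s)) =
  fold_right Rplus 0 (map (fun i => INR (h i)) s).
Proof. induction s; simpl; auto. rewrite plus_INR, IHs. reflexivity. Qed.

Lemma sum_f_R0_seq (g : nat -> R) n : (1 <= n)%nat ->
  sum_f_R0 g n = g 0%nat + g n + fold_right Rplus 0 (map g (seq 1 (n - 1))).
Proof.
  intros Hn. induction n as [|n IH]; [lia|].
  destruct (Nat.eq_dec n 0) as [->|Hn0]; [simpl; ring|].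
  cbn [sum_f_R0]. rewrite IH by lia.
  replace (S n - 1)%nat with (S (n - 1)) by lia.
  rewrite seq_S, map_app, fold_right_app. replace (1 + (n - 1))%nat with n by lia.
  assert (Hf : forall l c, fold_right Rplus c l = c + fold_right Rplus 0 l).
  { induction l as [|y l IHl]; intros; simpl; [ring|rewrite IHl; ring]. }
  simpl. rewrite (Hf _ (g n + 0)). ring.
Qed.

Lemma infinite_sum_shift (u : nat -> R) (l : R) :
  is_series u l -> u 0%nat = 0 -> infinite_sum (fun n => u (S n)) l.
Proof.
  intros Hu H0. apply is_series_Reals, (is_series_incr_1 u).
  change (plus l (u 0%nat)) with (l + u 0%nat). rewrite H0, Rplus_0_r. exact Hu.
Qed.

Section Consequences.
Variable k : nat.
Variable f : nat -> nat.
Hypothesis hf : forall n, counts (fun t => leaves t = n /\ (gamma t <= k)%nat) (f n).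

Lemma recurrence_Z n : (1 <= k)%nat -> (1 <= n)%nat ->
  Z.of_nat (f n) =
    ((if Nat.eqb n 1 then 1 else 0)
     + fold_right Z.add 0%Z (map (fun i => Z.of_nat (f i * f (n - i)%nat)%nat) (seq 1 (n - 1)%nat))
     - (if Nat.eqb n (k + 1)%nat then 2 ^ Z.of_nat (k - 1)%nat else 0))%Z.
Proof.
  intros hk Hn. destruct (Nat.eqb_spec n 1) as [->|Hn1].
  - rewrite (f_one k f hf hk). replace (Nat.eqb 1 (k + 1)) with false by (symmetry; apply Nat.eqb_neq; lia).
    reflexivity.
  - pose proof (count_recurrence k f hf n hk ltac:(lia)) as H. unfold convolution in H.
    rewrite <- Z_of_nat_fold_sum, H, Nat2Z.inj_add.
    destruct (Nat.eqb n (k + 1)); [rewrite Nat2Z.inj_pow|]; simpl; lia.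
Qed.

Lemma convolution_R n :
  sum_f_R0 (fun i => INR (f i) * INR (f (n - i)%nat)) n = INR (convolution f n).
Proof.
  unfold convolution. rewrite INR_fold_sum.
  destruct n as [|n]; [simpl; rewrite (f_zero k f hf); simpl; ring|].
  rewrite sum_f_R0_seq by lia. rewrite Nat.sub_0_r, Nat.sub_diag, (f_zero k f hf).
  simpl (INR 0). rewrite Rmult_0_l, Rmult_0_r, !Rplus_0_l.
  apply f_equal, map_ext. intros i. rewrite mult_INR. reflexivity.
Qed.

Lemma recurrence_R n : (1 <= k)%nat -> INR (f n) = (if Nat.eqb n 1 then 1 else 0) +
  sum_f_R0 (fun i => INR (f i) * INR (f (n - i)%nat)) n -
  (if Nat.eqb n (k + 1) then 2 ^ (k - 1) else 0).
Proof.
  intros hk. rewrite convolution_R.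
  destruct (Nat.eqb_spec n (k + 1)) as [Ek|Ek].
  - subst n. pose proof (count_recurrence k f hf (k + 1) hk ltac:(lia)) as H.
    rewrite Nat.eqb_refl in H. rewrite H, plus_INR, pow_INR.
    replace (Nat.eqb (k + 1) 1) with false by (symmetry; apply Nat.eqb_neq; lia).
    replace (INR 2) with 2 by (simpl; ring). ring.
  - destruct n as [|[|n]].
    + unfold convolution. rewrite (f_zero k f hf). simpl. ring.
    + unfold convolution. rewrite (f_one k f hf hk). simpl. ring.
    + rewrite (count_recurrence k f hf (S (S n)) hk ltac:(lia)), plus_INR.
      replace (Nat.eqb (S (S n)) (k + 1)) with false by (symmetry; apply Nat.eqb_neq; lia).
      simpl. ring.
Qed.

End Consequences.

Theorem mainTheorem1 (k : nat) (hk : (1 <= k)%nat) (f : nat -> nat)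
  (hf : forall n : nat, counts (fun t => leaves t = n /\ (gamma t <= k)%nat) (f n)) :
  (* F = x + F^2 - 2^(k-1) x^(k+1), coefficientwise for n >= 1 *)
  (forall n : nat, (1 <= n)%nat ->
     Z.of_nat (f n) =
       ((if Nat.eqb n 1 then 1 else 0)
        + fold_right Z.add 0%Z
            (map (fun i => Z.of_nat (f i * f (n - i)%nat)%nat) (seq 1 (n - 1)%nat))
        - (if Nat.eqb n (k + 1)%nat then 2 ^ Z.of_nat (k - 1)%nat else 0))%Z)
  /\
  (* closed form, as an identity of convergent power series for |x| < 1/4 *)
  (forall x : R, (Rabs x < / 4)%R ->
     infinite_sum (fun n => (INR (f (S n)) * x ^ (S n))%R)
       ((1 - sqrt (1 - 4 * x + 2 ^ (k + 1) * x ^ (k + 1))) / 2)%R).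
Proof.
  split; [intro n; exact (recurrence_Z k f hf n hk)|].
  intros x Hx.
  assert (Coef : 2 ^ (k + 1) = 4 * 2 ^ (k - 1)).
  { replace (k + 1)%nat with (k - 1 + 2)%nat by lia. rewrite pow_add. simpl. ring. }
  rewrite Coef.
  apply (infinite_sum_shift (fun n => INR (f n) * x ^ n)).
  - apply quadratic_series_sum; auto.
    + intro n; apply pos_INR.
    + rewrite (f_zero k f hf); reflexivity.
    + apply pow_le; lra.
    + intro n; apply recurrence_R; auto.
  - simpl. rewrite (f_zero k f hf). simpl. ring.
Qed.
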